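(* Let $R$ be an abelian Rickart $*$-ring and $a,b\in R$. The following are equivalent: (i) $a\leq b$ in the natural partial order; (ii) there exists a projection $e\in R$ with $a=ae=be$; (iii) $ab=a^2=ba$.
   Context: A projection is $e$ with $e=e^2=e^*$. A Rickart $*$-ring is a $*$-ring in which the right annihilator $\{x: ax=0\}$ of every element $a$ is of the form $eR$ for a projection $e$ (such rings have unity). A ring is abelian if all its idempotents are central. Natural partial order: $a\leq b$ iff there is $x\in R$ with $a=xa=xb=ax^*=bx^*$. *)

From HB Require Import structures.
From mathcomp Require Import all_boot all_algebra.
Set Implicit Arguments. Unset Strict Implicit. Unset Printing Implicit Defensive.
Import GRing.Theory.
Local Open Scope ring_scope.

Definition is_involution (R : pzRingType) (star : R -> R) : Prop :=
  [/\ forall x y, star (x + y) = star x + star y,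
      forall x y, star (x * y) = star y * star x
    & forall x, star (star x) = x].

Definition projection (R : pzRingType) (star : R -> R) (e : R) : Prop :=
  e * e = e /\ star e = e.

Definition rickart (R : pzRingType) (star : R -> R) : Prop :=
  forall a : R, exists e : R, projection star e /\
    forall x : R, a * x = 0 <-> exists y : R, x = e * y.

Definition abelian_ring (R : pzRingType) : Prop :=
  forall e : R, e * e = e -> forall x : R, e * x = x * e.

Definition nat_le (R : pzRingType) (star : R -> R) (a b : R) : Prop :=
  exists x : R, [/\ a = x * a, a = x * b, a = a * star x & a = b * star x].

(** Every element [x] of a Rickart *-ring has a right annihilator [fR] with [f]
    a projection, and in an abelian ring [f] is central.  If [a <= b] via [x],
    then [x (a - b) = 0] puts [a - b] in [fR], while [a = a x^*] forces
    [a f = f a = 0]; hence [a (a - b) = (a - b) a = 0].  Conversely, if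
    [a b = a^2] and [f] is the projection of the right annihilator of [a], then
    [e = 1 - f] is a projection with [a e = a] and, since [b - a] lies in [fR],
    [(b - a) e = 0], i.e. [b e = a]; such an [e] witnesses [a <= b]. *)
From HB Require Import structures.
From mathcomp Require Import all_boot all_algebra.
Set Implicit Arguments. Unset Strict Implicit. Unset Printing Implicit Defensive.
Local Open Scope ring_scope.
Import GRing.Theory.

Section StarRing.
Variables (R : pzRingType) (star : R -> R).
Hypothesis star_inv : is_involution star.

Lemma starD x y : star (x + y) = star x + star y.
Proof. by case: star_inv. Qed.

Lemma starM x y : star (x * y) = star y * star x.
Proof. by case: star_inv. Qed.

Lemma starK : involutive star.
Proof. by case: star_inv. Qed.

Lemma star0 : star 0 = 0.
Proof. by apply: (@addrI _ (star 0)); rewrite -starD !addr0. Qed.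

Lemma starN x : star (- x) = - star x.
Proof. by apply/eqP; rewrite -subr_eq0 opprK -starD addNr star0. Qed.

Lemma star1 : star 1 = 1.
Proof. by rewrite -[star 1]mulr1 -{2}(starK 1) -starM mulr1 starK. Qed.

Lemma projection_compl e : projection star e -> projection star (1 - e).
Proof.
case=> ee se; split; first by rewrite mulrBl mul1r mulrBr mulr1 ee subrr subr0.
by rewrite starD star1 starN se.
Qed.

End StarRing.

Section AbelianRickart.
Variables (R : pzRingType) (star : R -> R).
Hypotheses (star_inv : is_involution star) (rickR : rickart star)
  (abR : abelian_ring R).

Lemma rann_projection a :
  exists f, [/\ projection star f, a * f = 0 & forall x, a * x = 0 -> f * x = x].
Proof.
have [f [[ff sf] rannP]] := rickR a.
exists f; split => //; first by apply/rannP; exists 1; rewrite mulr1.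
by move=> x /rannP [y ->]; rewrite mulrA ff.
Qed.

Lemma projection_nat_le a b e :
  projection star e -> a = a * e -> a = b * e -> nat_le star a b.
Proof. by case=> ee se ae be; exists e; rewrite se !(abR ee). Qed.

Lemma nat_le_sqr a b : nat_le star a b -> a * b = a ^+ 2 /\ a ^+ 2 = b * a.
Proof.
case=> x [xa xb ax _].
have [f [[ff sf] xf rannP]] := rann_projection x.
have fC := abR ff.
have af : a * f = 0.
  by rewrite ax -mulrA -sf -(starM star_inv) fC xf (star0 star_inv) mulr0.
have fab : f * (a - b) = a - b by apply: rannP; rewrite mulrBr -xa -xb subrr.
split; apply/eqP; rewrite expr2.
- by rewrite eq_sym -subr_eq0 -mulrBr -fab mulrA af mul0r.
- by rewrite -subr_eq0 -mulrBl -fab fC -mulrA fC af mulr0.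
Qed.

Lemma mul_sqr_projection a b :
  a * b = a ^+ 2 -> exists e, projection star e /\ a = a * e /\ a = b * e.
Proof.
move=> abE; have [f [pf af rannP]] := rann_projection a.
have [ee se] := projection_compl star_inv pf.
have ae : a * (1 - f) = a by rewrite mulrBr mulr1 af subr0.
have fba : f * (b - a) = b - a by apply: rannP; rewrite mulrBr abE expr2 subrr.
have bae : (b - a) * (1 - f) = 0 by rewrite -(abR ee) mulrBl mul1r fba subrr.
exists (1 - f); split; first by [].
split; first by rewrite ae.
by apply/eqP; rewrite eq_sym -subr_eq0 -[X in _ - X]ae -mulrBl bae.
Qed.

End AbelianRickart.

Theorem mainTheorem8 (R : pzRingType) (star : R -> R)
  (Hstar : is_involution star) (Hrick : rickart star) (Hab : abelian_ring R)
  (a b : R) :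
  (nat_le star a b <-> exists e : R, projection star e /\ a = a * e /\ a = b * e) /\
  (nat_le star a b <-> a * b = a ^+ 2 /\ a ^+ 2 = b * a).
Proof.
have i_iii := @nat_le_sqr R star Hstar Hrick Hab a b.
have iii_ii := @mul_sqr_projection R star Hstar Hrick Hab a b.
have ii_i := @projection_nat_le R star Hab a b.
split; split.
- by case/i_iii => /iii_ii.
- by case=> e [pe [ae be]]; apply: ii_i pe ae be.
- exact: i_iii.
- by case=> /iii_ii [e [pe [ae be]]] _; apply: ii_i pe ae be.
Qed.
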